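(* Let $G$ be a connected graph on $n$ vertices with distance matrix $D$. (i) If $G$ is not distance exceptional and $\kappa=D^+(n\vec 1)$, where $D^+$ is the Moore–Penrose inverse of $D$, then $\iota(G)=\dfrac{n}{\vec 1^\top\kappa}\in\mathbb{R}\cup\{\infty\}$ (with $n/0=\infty$). (ii) Let $\lambda_1\le\dots\le\lambda_n$ be the eigenvalues of $D$ with an orthonormal set of corresponding eigenvectors $\vec u_1,\dots,\vec u_n$. Then $$\iota(G)^{-1}=\sum_{i=1}^n\frac{(\vec u_i^\top\vec 1)^2}{\lambda_i}\in\mathbb{R}\cup\{\infty\},$$ interpreted as an extended real expression with the conventions $1/\infty=0$, $1/0=\infty$, $0/0=0$.
   Context: For a connected graph $G$ on vertices $v_1,\dots,v_n$, its distance matrix is $D=(d(v_i,v_j))_{i,j=1}^n$, where $d$ is the shortest-path distance; $\vec 1$ denotes the all-ones vector. $G$ is distance exceptional if $D\vec x=\vec 1$ has no solution. A curvature potential is a vector $\vec x$ with $D\vec x=\vec 1$. Curvature index $\iota(G)\in\mathbb{R}\cup\{\infty\}$: if $G$ is distance exceptional or has a curvature potential $\vec x$ with $\vec 1^\top\vec x\neq0$, then $\iota(G)$ is the unique real number with $\{D\vec x:\vec 1^\top\vec x=1\}\cap\mathbb{R}\vec 1=\{\iota(G)\vec 1\}$ (this intersection is a single point); otherwise (curvature potentials exist and all have $\vec 1^\top\vec x=0$) $\iota(G)=\infty$. *)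

From HB Require Import structures.
From mathcomp Require Import all_boot all_order all_algebra.
From mathcomp Require Import reals.
Set Implicit Arguments. Unset Strict Implicit. Unset Printing Implicit Defensive.
Import Order.TTheory GRing.Theory Num.Theory.
Local Open Scope ring_scope.

Definition simple_graph (n : nat) (adj : rel 'I_n) : Prop :=
  symmetric adj /\ irreflexive adj.

Definition connected_graph (n : nat) (adj : rel 'I_n) : Prop :=
  forall u v : 'I_n, connect adj u v.

Definition walkb (n : nat) (adj : rel 'I_n) (u v : 'I_n) (k : nat) : bool :=
  [exists p : k.-tuple 'I_n, path adj u p && (last u p == v)].

(* Shortest-path distance: least k < n with a walk of length k from u to v
   (a shortest walk is a shortest path; in a connected graph on n vertices
   it has length < n). Returns n if no such walk exists. *)
Definition gdist (n : nat) (adj : rel 'I_n) (u v : 'I_n) : nat :=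
  find (walkb adj u v) (iota 0 n).

Definition dist_matrix (R : realType) (n : nat) (adj : rel 'I_n) : 'M[R]_n :=
  \matrix_(i, j) (gdist adj i j)%:R.

Definition ones (R : realType) (n : nat) : 'cV[R]_n := const_mx 1.

Definition sumv (R : realType) (n : nat) (x : 'cV[R]_n) : R := \sum_i x i 0.

Definition distance_exceptional (R : realType) (n : nat) (D : 'M[R]_n) : Prop :=
  ~ exists x : 'cV[R]_n, D *m x = ones R n.

(* Values in R ∪ {∞}: Some r = r, None = ∞. *)
(* iota_spec D i  <->  i is the curvature index of (the graph with distance matrix) D,
   exactly following the definition in the paper. *)
Definition iota_spec (R : realType) (n : nat) (D : 'M[R]_n) (i : option R) : Prop :=
  match i with
  | Some r =>
      (distance_exceptional D \/
         exists x : 'cV[R]_n, D *m x = ones R n /\ sumv x != 0) /\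
      (forall c : R, (exists x : 'cV[R]_n, sumv x = 1 /\ D *m x = c *: ones R n)
                     <-> c = r)
  | None =>
      ~ distance_exceptional D /\
      (exists x : 'cV[R]_n, D *m x = ones R n) /\
      (forall x : 'cV[R]_n, D *m x = ones R n -> sumv x = 0)
  end.

Definition is_MP_inverse (R : realType) (n : nat) (A X : 'M[R]_n) : Prop :=
  [/\ A *m X *m A = A, X *m A *m X = X, (A *m X)^T = A *m X & (X *m A)^T = X *m A].

Definition ediv_inf (R : realType) (a b : R) : option R :=
  if b == 0 then None else Some (a / b).

Definition einv (R : realType) (i : option R) : option R :=
  match i with
  | None => Some 0
  | Some r => if r == 0 then None else Some r^-1
  end.

Definition esum_ratio (R : realType) (n : nat) (a b : 'I_n -> R) : option R :=
  if [exists i, (b i == 0) && (a i != 0)] then None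
  else Some (\sum_i a i / b i).

From HB Require Import structures.
From mathcomp Require Import all_boot all_order all_algebra.
From mathcomp Require Import reals.
From Stdlib Require Import Classical.
Set Implicit Arguments. Unset Strict Implicit. Unset Printing Implicit Defensive.
Import Order.TTheory GRing.Theory Num.Theory.
Local Open Scope ring_scope.

(* The distance matrix D is symmetric, so for a curvature potential x0 and any
   x with D x = c 1 we get 1^T x = x0^T D x = c (1^T x0): all potentials have the
   same total weight s, and a vector of total weight 1 can only be mapped to
   c 1 with c = 1/s. Hence iota = 1/s (or infinity when s = 0), and a kernel
   vector of nonzero weight makes D exceptional with iota = 0.
   (i) D D^+ D = D makes D^+ (n 1) a potential scaled by n.
   (ii) Expanding in the orthonormal eigenbasis, the weight of the potential
   sum_i (u_i^T 1 / lam_i) u_i is sum_i (u_i^T 1)^2 / lam_i; when some lam_i = 0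
   has u_i^T 1 <> 0, u_i is such a kernel vector. *)

Lemma walkb_sym (n : nat) (adj : rel 'I_n) (u v : 'I_n) (k : nat) :
  symmetric adj -> walkb adj u v k -> walkb adj v u k.
Proof.
move=> adj_sym /existsP [p /andP [walk_p /eqP last_p]].
have size_rev_p : size (rev (belast u p)) == k.
  by rewrite size_rev size_belast size_tuple.
apply/existsP; exists (Tuple size_rev_p) => /=.
move: walk_p last_p; case/lastP: (tval p) => [_ /= -> | q z]; first by rewrite eqxx.
rewrite -rev_path => walk_p last_p; rewrite last_p in walk_p.
move: walk_p; rewrite belast_rcons rev_cons last_rcons eqxx andbT.
by apply: sub_path => x y; rewrite adj_sym.
Qed.

Lemma gdistC (n : nat) (adj : rel 'I_n) (u v : 'I_n) :
  symmetric adj -> gdist adj u v = gdist adj v u.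
Proof.
by move=> adj_sym; apply: eq_find => k; apply/idP/idP; apply: walkb_sym.
Qed.

Lemma trmx_dist_matrix (R : realType) (n : nat) (adj : rel 'I_n) :
  symmetric adj -> (dist_matrix R adj)^T = dist_matrix R adj.
Proof. by move=> adj_sym; apply/matrixP => i j; rewrite !mxE gdistC. Qed.

Section CurvatureIndex.

Variables (R : realType) (n : nat).
Implicit Types (D U : 'M[R]_n) (x u : 'cV[R]_n).

Lemma sumvE x : sumv x = ((ones R n)^T *m x) 0 0.
Proof. by rewrite mxE; apply: eq_bigr => i _; rewrite !mxE mul1r. Qed.

Lemma sumv_trmxE x : sumv x = (x^T *m ones R n) 0 0.
Proof. by rewrite -[ones R n]trmxK -trmx_mul mxE -sumvE. Qed.

Lemma sumvZ a x : sumv (a *: x) = a * sumv x.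
Proof. by rewrite /sumv big_distrr; apply: eq_bigr => i _; rewrite mxE. Qed.

Lemma sumv_col U i : sumv (col i U) = (U^T *m ones R n) i 0.
Proof. by rewrite mxE; apply: eq_bigr => k _; rewrite !mxE mulr1. Qed.

Lemma sumv_ord0 x : n = 0%N -> sumv x = 0.
Proof. by move=> n0; rewrite /sumv big1 // => i; have := leq_trans (ltn_ord i) (eq_leq n0). Qed.

Lemma trmx_sym_mulmx D u x : D^T = D -> u^T *m (D *m x) = (D *m u)^T *m x.
Proof. by move=> D_sym; rewrite trmx_mul D_sym mulmxA. Qed.

Lemma potential_sumv D x0 x c :
  D^T = D -> D *m x0 = ones R n -> D *m x = c *: ones R n ->
  sumv x = c * sumv x0.
Proof.
move=> D_sym Dx0 Dx.
by rewrite sumvE -Dx0 -trmx_sym_mulmx // Dx -scalemxAr mxE -sumv_trmxE.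
Qed.

Lemma iota_spec_potential D x0 :
  D^T = D -> D *m x0 = ones R n -> iota_spec D (ediv_inf 1 (sumv x0)).
Proof.
move=> D_sym Dx0; rewrite /ediv_inf; case: eqP => [s0 | /eqP s_neq0].
  split; [by apply; exists x0 | split; first by exists x0] => x Dx.
  by rewrite (potential_sumv D_sym Dx0 (_ : _ = 1 *: _)) ?scale1r // s0 mulr0.
split; first by right; exists x0.
move=> c; split => [[x [sum_x Dx]] | ->].
  by apply: (mulIf s_neq0); rewrite -(potential_sumv D_sym Dx0 Dx) sum_x mul1r mulVf.
exists ((sumv x0)^-1 *: x0); split; first by rewrite sumvZ mulVf.
by rewrite -scalemxAr Dx0 mul1r.
Qed.

Lemma iota_spec_kernel D u :
  D^T = D -> D *m u = 0 -> sumv u != 0 -> iota_spec D (Some 0).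
Proof.
move=> D_sym Du0 sum_u.
have exceptional : distance_exceptional D.
  move=> [x Dx]; move: sum_u.
  by rewrite sumv_trmxE -Dx trmx_sym_mulmx // Du0 trmx0 mul0mx mxE eqxx.
split; [by left | move=> c; split => [[x [_ Dx]] | ->]].
  apply/eqP/negPn/negP => c_neq0; apply: exceptional.
  by exists (c^-1 *: x); rewrite -scalemxAr Dx scalerA mulVf // scale1r.
exists ((sumv u)^-1 *: u); split; first by rewrite sumvZ mulVf.
by rewrite -scalemxAr Du0 scaler0 scale0r.
Qed.

Lemma ediv_inf_mull (c s : R) : (c = 0 -> s = 0) -> ediv_inf c (c * s) = ediv_inf 1 s.
Proof.
rewrite /ediv_inf mulf_eq0; case: eqP => [c0 /(_ c0) -> | /eqP c_neq0 _] /=.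
  by rewrite eqxx.
by case: eqP => // _; rewrite invfM mulrA divff.
Qed.

Lemma einv_ediv_inf1 (s : R) : einv (ediv_inf 1 s) = Some s.
Proof.
rewrite /ediv_inf; case: eqP => [-> | /eqP s_neq0] //=.
by rewrite div1r invr_eq0 (negbTE s_neq0) invrK.
Qed.

Lemma mulmx_eigencols D U (lam : 'I_n -> R) :
  (forall i, D *m col i U = lam i *: col i U) ->
  D *m U = U *m diag_mx (\row_i lam i).
Proof.
move=> eigen; apply/matrixP => k i.
have := congr1 (fun v : 'cV[R]_n => v k 0) (eigen i).
rewrite mul_mx_diag !mxE [in RHS]mulrC => <-.
by apply: eq_bigr => j _; rewrite !mxE.
Qed.

Lemma spectral_potential D U (lam : 'I_n -> R) :
  U^T *m U = 1%:M ->
  (forall i, D *m col i U = lam i *: col i U) ->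
  (forall i, lam i = 0 -> sumv (col i U) = 0) ->
  (* Where lam i = 0 the coordinate is 0 / 0 = 0, matching sumv (col i U) = 0. *)
  let x := U *m \col_i (sumv (col i U) / lam i) in
  D *m x = ones R n /\ sumv x = \sum_i (sumv (col i U)) ^+ 2 / lam i.
Proof.
move=> U_orth eigen kernel_sum x; split.
  have diag_y : diag_mx (\row_i lam i) *m \col_i (sumv (col i U) / lam i)
                = U^T *m ones R n.
    apply/matrixP => i j; rewrite mul_diag_mx (ord1 j) -sumv_col !mxE.
    have [lam0 | lam_neq0] := eqVneq (lam i) 0; first by rewrite (kernel_sum _ lam0) lam0 mul0r.
    by rewrite mulrCA divff // mulr1.
  by rewrite mulmxA (mulmx_eigencols eigen) -mulmxA diag_y mulmxA (mulmx1C U_orth) mul1mx.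
rewrite sumvE mulmxA -{1}[U]trmxK -trmx_mul mxE.
by apply: eq_bigr => i _; rewrite [_^T 0 i]mxE -sumv_col mxE mulrA -expr2.
Qed.

End CurvatureIndex.

Theorem proposition3p3 (R : realType) (n : nat) (adj : rel 'I_n) :
  simple_graph adj -> connected_graph adj ->
  (* (i) *)
  (forall Dp : 'M[R]_n,
     ~ distance_exceptional (dist_matrix R adj) ->
     is_MP_inverse (dist_matrix R adj) Dp ->
     iota_spec (dist_matrix R adj)
       (ediv_inf n%:R (sumv (Dp *m (n%:R *: ones R n))))) /\
  (* (ii) *)
  (forall (lam : 'I_n -> R) (U : 'M[R]_n),
     (forall i j : 'I_n, (i <= j)%N -> lam i <= lam j) ->
     U^T *m U = 1%:M ->
     (forall i : 'I_n, dist_matrix R adj *m col i U = lam i *: col i U) ->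
     exists io : option R,
       iota_spec (dist_matrix R adj) io /\
       einv io = esum_ratio (fun i => (sumv (col i U)) ^+ 2) lam).
Proof.
move=> [adj_sym _] _; have D_sym := trmx_dist_matrix R adj_sym.
set D := dist_matrix R adj in D_sym *; split.
  move=> Dp not_exc [DDpD _ _ _].
  have [x0 Dx0] : exists x0, D *m x0 = ones R n by apply: NNPP.
  have Dk : D *m (Dp *m (n%:R *: ones R n)) = n%:R *: ones R n.
    by rewrite -Dx0 !scalemxAr !mulmxA DDpD.
  rewrite (potential_sumv D_sym Dx0 Dk) ediv_inf_mull.
    exact: iota_spec_potential.
  by move/eqP; rewrite pnatr_eq0 => /eqP /sumv_ord0 ->.
move=> lam U _ U_orth eigen; rewrite /esum_ratio.
case: existsP => [[i /andP [/eqP lam0]] | no_bad].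
  rewrite sqrf_eq0 => sum_i; exists (Some 0); split; last by rewrite /einv eqxx.
  apply: (iota_spec_kernel D_sym (u := col i U)) => //.
  by rewrite eigen lam0 scale0r.
have kernel_sum i : lam i = 0 -> sumv (col i U) = 0.
  move=> lam0; apply/eqP; rewrite -sqrf_eq0; apply/negPn/negP => sum_i.
  by apply: no_bad; exists i; rewrite lam0 eqxx.
have [Dx sum_x] := spectral_potential U_orth eigen kernel_sum.
exists (ediv_inf 1 (sumv (U *m \col_i (sumv (col i U) / lam i)))).
split; [exact: iota_spec_potential | by rewrite einv_ediv_inf1 sum_x].
Qed.
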